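(* Let $\gamma\in[0,1]$ and $V_p^->0$ be constants, and let $V_p>0$, $c>0$. Define $$p(v,V_p,c)=(1-\gamma)\Big(\frac{V_p}{V_p^-}\Big)^2v+\gamma v^3-(v+c)^3,$$ and suppose that $p(\cdot,V_p,c)$ has two positive zeros $0<v_1<v_2$. Consider the autonomous system $$\dot v=(1-\gamma)\Big(\frac{V_p}{V_p^-}\Big)^2m^3-(1-\gamma m^3)v^2,\qquad \dot m=(1-m)v-cm .$$ If $a=(a_1,a_2)$ and $b=(b_1,b_2)$ satisfy $$v_1<a_1<v_2,\qquad \sqrt[3]{\frac{a_1^2}{(1-\gamma)(V_p/V_p^-)^2+\gamma a_1^2}}<a_2<\frac{a_1}{a_1+c},$$ and $$v_2<b_1,\qquad \frac{b_1}{b_1+c}<b_2<\sqrt[3]{\frac{b_1^2}{(1-\gamma)(V_p/V_p^-)^2+\gamma b_1^2}},$$ then the box $K_{a,b}=[a_1,b_1]\times[a_2,b_2]$ is forward invariant under the flow of this system.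
   Context: The positive equilibria of the system are the points $(v,m)$ with $v>0$, $p(v,V_p,c)=0$ and $m=v/(v+c)$. Here $v$ is the dimensionless wind speed, $m$ the moisture, $V_p$ the maximum potential velocity (with $V_p^-$ a fixed reference value), $c$ the dimensionless wind shear. *)

From Stdlib Require Import Reals Lra.
From Coquelicot Require Import Coquelicot.
Open Scope R_scope.

Definition cbrt (x : R) : R := Rpower x (/ 3).

Definition pol (g Vpm Vp c v : R) : R :=
  (1 - g) * (Vp / Vpm) ^ 2 * v + g * v ^ 3 - (v + c) ^ 3.

Definition field_v (g Vpm Vp v m : R) : R :=
  (1 - g) * (Vp / Vpm) ^ 2 * m ^ 3 - (1 - g * m ^ 3) * v ^ 2.
Definition field_m (c v m : R) : R := (1 - m) * v - c * m.

Definition mbound (g Vpm Vp v : R) : R :=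
  cbrt (v ^ 2 / ((1 - g) * (Vp / Vpm) ^ 2 + g * v ^ 2)).

Definition in_box (a1 a2 b1 b2 x y : R) : Prop :=
  a1 <= x <= b1 /\ a2 <= y <= b2.

Definition is_solution (g Vpm Vp c T : R) (v m : R -> R) : Prop :=
  forall t, 0 <= t < T ->
    is_derive v t (field_v g Vpm Vp (v t) (m t)) /\
    is_derive m t (field_m c (v t) (m t)).

Definition forward_invariant_box (g Vpm Vp c a1 a2 b1 b2 : R) : Prop :=
  forall (T : R) (v m : R -> R),
    is_solution g Vpm Vp c T v m ->
    in_box a1 a2 b1 b2 (v 0) (m 0) ->
    forall t, 0 <= t < T -> in_box a1 a2 b1 b2 (v t) (m t).

From Stdlib Require Import Reals Lra Classical.
From Coquelicot Require Import Coquelicot.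
Open Scope R_scope.

(* On every face of the box the vector field points strictly into the box:
   [mbound g Vpm Vp v] is the m-coordinate of the v-nullcline and [v / (v + c)]
   that of the m-nullcline, and the hypotheses on a and b put the four faces on
   the right sides of these nullclines.  A solution then cannot leave the box:
   at the supremum of the times up to which it stays inside it is still inside
   by continuity, and strict inwardness keeps it inside a little longer. *)

Lemma is_derive_continuous (f : R -> R) (s l : R) : is_derive f s l -> continuous f s.
Proof.
  intros Hf; apply (ex_derive_continuous (K := R_AbsRing) (V := R_NormedModule)).
  exists l; exact Hf.
Qed.

Lemma at_right_interval (P : R -> Prop) (s : R) :
  at_right s P -> exists d, 0 < d /\ forall u, s < u < s + d -> P u.
Proof.
  intros [eps Heps]; exists eps; split; [apply cond_pos |].
  intros u Hu; apply Heps; [| lra].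
  unfold ball; simpl; unfold AbsRing_ball, abs, minus, plus, opp; simpl.
  rewrite Rabs_pos_eq; lra.
Qed.

Lemma is_derive_pos_at_right (f : R -> R) (s l : R) :
  is_derive f s l -> 0 < l -> at_right s (fun u => f s < f u).
Proof.
  intros [_ Hdom] Hl.
  (* with tolerance l / 2 the linearization gives f u - f s >= (u - s) l / 2 *)
  assert (Hhalf : 0 < l / 2) by lra.
  specialize (Hdom s (fun P HP => HP) (mkposreal _ Hhalf)).
  unfold at_right, within; revert Hdom; apply filter_imp; simpl; intros u Hu Hsu.
  unfold norm, minus, plus, opp, scal in Hu; simpl in Hu.
  unfold abs, mult in Hu; simpl in Hu.
  rewrite (Rabs_pos_eq (u + - s)) in Hu by lra.
  apply Rabs_le_between in Hu; nra.
Qed.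

Lemma is_derive_ge_at_right (f : R -> R) (s l lo : R) :
  is_derive f s l -> lo <= f s -> (f s = lo -> 0 < l) ->
  at_right s (fun u => lo <= f u).
Proof.
  intros Hf [Hlt | Heq] Hedge.
  - unfold at_right, within.
    apply (filter_imp (fun u => lo < f u)); [intros; lra |].
    apply (is_derive_continuous f s l Hf), open_gt, Hlt.
  - apply (filter_imp (fun u => f s < f u)); [intros; lra |].
    apply (is_derive_pos_at_right f s l Hf), Hedge; symmetry; exact Heq.
Qed.

Lemma is_derive_between_at_right (f : R -> R) (s l lo hi : R) :
  is_derive f s l -> lo <= f s <= hi ->
  (f s = lo -> 0 < l) -> (f s = hi -> l < 0) ->
  at_right s (fun u => lo <= f u <= hi).
Proof.
  intros Hf [Hlo Hhi] Hedge_lo Hedge_hi.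
  assert (Hopp : at_right s (fun u => - hi <= - f u)).
  { apply (is_derive_ge_at_right (fun u => - f u) s (- l)).
    - exact (is_derive_opp f s l Hf).
    - lra.
    - intros Heq; apply Ropp_0_gt_lt_contravar, Hedge_hi; lra. }
  apply (filter_imp (fun u => lo <= f u /\ - hi <= - f u)); [intros u []; lra |].
  apply filter_and; [apply (is_derive_ge_at_right f s l) |]; assumption.
Qed.

Lemma between_of_at_left (f : R -> R) (s lo hi : R) :
  continuous f s -> at_left s (fun u => lo <= f u <= hi) -> lo <= f s <= hi.
Proof.
  intros Hf Hleft.
  apply (closed_filterlim_loc (FF := Proper_StrongProper _ (at_left_proper_filter s))
           f (fun r => lo <= r <= hi)).
  - exact (filterlim_filter_le_1 f (filter_le_within _) Hf).
  - exact Hleft.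
  - apply closed_and; [apply closed_ge | apply closed_le].
Qed.

Lemma continuous_induction (P : R -> Prop) (T : R) :
  P 0 ->
  (forall s, 0 < s < T -> at_left s P -> P s) ->
  (forall s, 0 <= s < T -> P s -> at_right s P) ->
  forall t, 0 <= t < T -> P t.
Proof.
  intros H0 Hclosed Hopen t Ht.
  set (E := fun s => 0 <= s <= t /\ forall u, 0 <= u <= s -> P u).
  assert (HE0 : E 0) by (split; [lra | intros u Hu; replace u with 0 by lra; exact H0]).
  destruct (completeness E) as [s [Hub Hlub]].
  { exists t; intros x [Hx _]; lra. }
  { exists 0; exact HE0. }
  assert (Hs : 0 <= s <= t).
  { split; [apply Hub, HE0 | apply Hlub; intros x [Hx _]; lra]. }
  assert (Hbefore : forall u, 0 <= u < s -> P u).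
  { intros u Hu.
    destruct (not_all_ex_not _ (fun x => E x -> x <= u)) as [x Hx].
    { intros Hall; assert (s <= u) by (apply Hlub; exact Hall); lra. }
    apply imply_to_and in Hx as [[_ HPx] Hxu].
    apply HPx; lra. }
  assert (HPs : P s).
  { destruct (Req_dec s 0) as [-> | Hs0]; [exact H0 |].
    apply Hclosed; [lra |].
    unfold at_left, within.
    apply (filter_imp (fun u => 0 < u)); [intros u Hu Hus; apply Hbefore; lra |].
    apply open_gt; lra. }
  destruct (Rlt_le_dec s t) as [Hst | Hts]; [| replace t with s by lra; exact HPs].
  destruct (at_right_interval P s (Hopen s ltac:(lra) HPs)) as [d [Hd Hright]].
  set (u := s + Rmin d (t - s) / 2).
  assert (Hmin : 0 < Rmin d (t - s) <= d /\ Rmin d (t - s) <= t - s).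
  { split; [split; [apply Rmin_pos; lra | apply Rmin_l] | apply Rmin_r]. }
  assert (HEu : E u).
  { split; [unfold u; lra |].
    intros w Hw.
    destruct (Rlt_le_dec w s) as [Hws | Hsw]; [apply Hbefore; lra |].
    destruct (Req_dec w s) as [-> | Hne]; [exact HPs |].
    apply Hright; unfold u in Hw; lra. }
  assert (u <= s) by (apply Hub, HEu).
  unfold u in *; lra.
Qed.

Definition inward_on_box (F1 F2 : R -> R -> R) (a1 a2 b1 b2 : R) : Prop :=
  forall x y, in_box a1 a2 b1 b2 x y ->
    (x = a1 -> 0 < F1 x y) /\ (x = b1 -> F1 x y < 0) /\
    (y = a2 -> 0 < F2 x y) /\ (y = b2 -> F2 x y < 0).

Lemma inward_box_forward_invariant (F1 F2 : R -> R -> R) (a1 a2 b1 b2 : R) :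
  inward_on_box F1 F2 a1 a2 b1 b2 ->
  forall (T : R) (x y : R -> R),
    (forall t, 0 <= t < T ->
       is_derive x t (F1 (x t) (y t)) /\ is_derive y t (F2 (x t) (y t))) ->
    in_box a1 a2 b1 b2 (x 0) (y 0) ->
    forall t, 0 <= t < T -> in_box a1 a2 b1 b2 (x t) (y t).
Proof.
  intros Hin T x y Hsol Hbox0.
  apply continuous_induction; [exact Hbox0 | |].
  - intros s Hs Hleft.
    destruct (Hsol s ltac:(lra)) as [Hx Hy].
    split; apply between_of_at_left;
      try (eapply is_derive_continuous; eassumption);
      revert Hleft; apply filter_imp; intros u []; assumption.
  - intros s Hs Hbox.
    destruct (Hsol s Hs) as [Hx Hy].
    destruct (Hin _ _ Hbox) as (Ha1 & Hb1 & Ha2 & Hb2).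
    destruct Hbox as [Hxs Hys].
    apply filter_and; [apply (is_derive_between_at_right x s (F1 (x s) (y s)))
                      | apply (is_derive_between_at_right y s (F2 (x s) (y s)))];
      assumption.
Qed.

Lemma cbrt_pos (x : R) : 0 < cbrt x.
Proof. apply exp_pos. Qed.

Lemma cbrt_pow3 (x : R) : 0 < x -> cbrt x ^ 3 = x.
Proof.
  intros Hx; unfold cbrt.
  rewrite <- Rpower_pow by apply exp_pos.
  rewrite Rpower_mult; replace (/ 3 * INR 3) with 1 by (simpl; field).
  apply Rpower_1, Hx.
Qed.

Lemma pow3_lt_compat (x y : R) : 0 <= x < y -> x ^ 3 < y ^ 3.
Proof.
  intros [Hx Hxy].
  replace (y ^ 3) with (x ^ 3 + (y - x) * (y * y + x * y + x * x)) by ring.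
  assert (0 < (y - x) * (y * y + x * y + x * x)); [apply Rmult_lt_0_compat; nra | lra].
Qed.

Lemma lt_cbrt_pow3 (x m : R) : 0 < x -> 0 <= m -> m < cbrt x -> m ^ 3 < x.
Proof.
  intros Hx Hm Hlt; rewrite <- (cbrt_pow3 x Hx); apply pow3_lt_compat; lra.
Qed.

Lemma cbrt_lt_pow3 (x m : R) : 0 < x -> cbrt x < m -> x < m ^ 3.
Proof.
  intros Hx Hlt; rewrite <- (cbrt_pow3 x Hx); apply pow3_lt_compat.
  pose proof (cbrt_pos x); lra.
Qed.

Section VelocityField.

Variables (g Vpm Vp : R).
Hypotheses (Hg : 0 <= g <= 1) (HVpm : 0 < Vpm) (HVp : 0 < Vp).

Let K := (1 - g) * (Vp / Vpm) ^ 2.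

Lemma field_v_eq (v m : R) : field_v g Vpm Vp v m = m ^ 3 * (K + g * v ^ 2) - v ^ 2.
Proof. unfold field_v, K; ring. Qed.

Lemma mbound_denom_pos (v : R) : 0 < v -> 0 < K + g * v ^ 2.
Proof.
  intros Hv.
  assert (HK : 0 <= K) by (apply Rmult_le_pos; [lra | apply pow2_ge_0]).
  destruct (Req_dec g 1) as [-> | Hg1]; [nra |].
  assert (0 < K); [| nra].
  apply Rmult_lt_0_compat; [lra | apply pow_lt, Rdiv_lt_0_compat; lra].
Qed.

Lemma field_v_pos_above_mbound (v m : R) :
  0 < v -> mbound g Vpm Vp v < m -> 0 < field_v g Vpm Vp v m.
Proof.
  intros Hv Hm; unfold mbound in Hm; fold K in Hm.
  pose proof (mbound_denom_pos v Hv) as HD.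
  apply cbrt_lt_pow3, (Rlt_div_l _ _ _ HD) in Hm; [| apply Rdiv_lt_0_compat; nra].
  rewrite field_v_eq; lra.
Qed.

Lemma field_v_neg_below_mbound (v m : R) :
  0 < v -> 0 <= m -> m < mbound g Vpm Vp v -> field_v g Vpm Vp v m < 0.
Proof.
  intros Hv Hm0 Hm; unfold mbound in Hm; fold K in Hm.
  pose proof (mbound_denom_pos v Hv) as HD.
  apply lt_cbrt_pow3, (Rlt_div_r _ _ _ HD) in Hm; [| apply Rdiv_lt_0_compat; nra | exact Hm0].
  rewrite field_v_eq; lra.
Qed.

End VelocityField.

Lemma field_m_pos (c v m : R) : 0 < v + c -> m < v / (v + c) -> 0 < field_m c v m.
Proof.
  intros Hvc Hm; apply (Rlt_div_r _ _ _ Hvc) in Hm; unfold field_m; lra.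
Qed.

Lemma field_m_neg (c v m : R) : 0 < v + c -> v / (v + c) < m -> field_m c v m < 0.
Proof.
  intros Hvc Hm; apply (Rlt_div_l _ _ _ Hvc) in Hm; unfold field_m; lra.
Qed.

Lemma div_add_le_div_add (c u v : R) : 0 < c -> 0 < u <= v -> u / (u + c) <= v / (v + c).
Proof.
  intros Hc Huv.
  apply (Rmult_le_reg_r ((u + c) * (v + c))); [nra |].
  field_simplify; nra.
Qed.

Lemma field_inward_on_box (g Vpm Vp c a1 a2 b1 b2 : R) :
  0 <= g <= 1 -> 0 < Vpm -> 0 < Vp -> 0 < c -> 0 < a1 ->
  mbound g Vpm Vp a1 < a2 < a1 / (a1 + c) ->
  b1 / (b1 + c) < b2 < mbound g Vpm Vp b1 ->
  inward_on_box (field_v g Vpm Vp) (field_m c) a1 a2 b1 b2.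
Proof.
  intros Hg HVpm HVp Hc Ha1 [Ha2_lo Ha2_hi] [Hb2_lo Hb2_hi] v m [Hv Hm].
  assert (Ha2 : 0 < a2) by (eapply Rlt_trans; [apply cbrt_pos | exact Ha2_lo]).
  repeat split; intros ->.
  - apply field_v_pos_above_mbound; lra.
  - apply field_v_neg_below_mbound; lra.
  - apply field_m_pos; [lra |].
    pose proof (div_add_le_div_add c a1 v Hc ltac:(lra)); lra.
  - apply field_m_neg; [lra |].
    pose proof (div_add_le_div_add c v b1 Hc ltac:(lra)); lra.
Qed.

Theorem proposition3p7 (g Vpm Vp c v1 v2 a1 a2 b1 b2 : R) :
  0 <= g <= 1 -> 0 < Vpm -> 0 < Vp -> 0 < c ->
  0 < v1 -> v1 < v2 ->
  pol g Vpm Vp c v1 = 0 -> pol g Vpm Vp c v2 = 0 ->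
  v1 < a1 < v2 ->
  mbound g Vpm Vp a1 < a2 < a1 / (a1 + c) ->
  v2 < b1 ->
  b1 / (b1 + c) < b2 < mbound g Vpm Vp b1 ->
  forward_invariant_box g Vpm Vp c a1 a2 b1 b2.
Proof.
  (* The zeros v1 < v2 of pol only guarantee that such a and b exist; the
     invariance itself needs nothing from them beyond a1 > v1 > 0. *)
  intros Hg HVpm HVp Hc Hv1 _ _ _ [Ha1 _] Ha2 _ Hb2.
  exact (inward_box_forward_invariant _ _ _ _ _ _
           (field_inward_on_box g Vpm Vp c a1 a2 b1 b2 Hg HVpm HVp Hc ltac:(lra) Ha2 Hb2)).
Qed.
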